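(* Let $n\ge2$ and let $\mathbb{K}$ be a field with $\operatorname{char}\mathbb{K}$ either $0$ or coprime to both $n$ and $n-1$. Let $A_n=\mathbb{K}[x,y]/(y^{2n+3},\, x^ny^2-y^{n+2},\, x^{2n+1}-xy^{n+1})$. Then every $\mathbb{K}$-linear derivation $\partial\colon A_n\to A_n$ satisfies $\partial(y^{2n+1})=0$.
   Context: A derivation of $A_n$ is a $\mathbb{K}$-linear map $\partial\colon A_n\to A_n$ satisfying $\partial(uv)=\partial(u)v+u\partial(v)$ for all $u,v\in A_n$. *)

From HB Require Import structures.
From mathcomp Require Import all_boot all_order all_algebra.
From mathcomp Require Import ring_quotient generic_quotient.
From mathcomp Require Import mpoly.
From Stdlib Require Import ClassicalEpsilon.
From mathcomp Require Import ring.

Set Implicit Arguments.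
Unset Strict Implicit.
Unset Printing Implicit Defensive.

Import GRing.Theory.
Local Open Scope ring_scope.
Local Open Scope quotient_scope.

Section An.
Variables (K : fieldType) (n : nat).

Definition xP : {mpoly K[2]} := 'X_(@ord0 1).
Definition yP : {mpoly K[2]} := 'X_(@ord_max 1).

Definition gen1 : {mpoly K[2]} := yP ^+ (2 * n + 3).
Definition gen2 : {mpoly K[2]} := xP ^+ n * yP ^+ 2 - yP ^+ (n + 2).
Definition gen3 : {mpoly K[2]} := xP ^+ (2 * n + 1) - xP * yP ^+ (n + 1).

Definition in_idealP (p : {mpoly K[2]}) : Prop :=
  exists a b c : {mpoly K[2]}, p = a * gen1 + b * gen2 + c * gen3.

Definition An_ideal : pred {mpoly K[2]} :=
  fun p => if excluded_middle_informative (in_idealP p) then true else false.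

Lemma An_idealE p : reflect (in_idealP p) (p \in An_ideal).
Proof.
rewrite unfold_in /An_ideal.
by case: excluded_middle_informative => h; constructor.
Qed.

Lemma An_ideal_closed : idealr_closed An_ideal.
Proof.
split.
- by apply/An_idealE; exists 0, 0, 0; rewrite !mul0r !addr0.
- apply/An_idealE => -[a [b [c]]] /(congr1 (meval (fun _ => (0 : K)))).
  rewrite !mevalD !mevalM /gen1 /gen2 /gen3 !mevalB !mevalM !rmorphXn /=.
  rewrite /xP /yP !mevalXU meval1 !expr0n /= !addnS /=.
  by rewrite !(mulr0, mul0r, subr0, addr0) => /eqP; rewrite oner_eq0.
- move=> r u v /An_idealE [a [b [c ->]]] /An_idealE [a' [b' [c' ->]]].
  apply/An_idealE; exists (r * a + a'), (r * b + b'), (r * c + c').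
  by rewrite !mulrDl !mulrDr !mulrA; ring.
Qed.

HB.instance Definition _ := isIdealr.Build {mpoly K[2]} An_ideal An_ideal_closed.

Definition An_idealr : idealr {mpoly K[2]} := Idealr.clone _ An_ideal _.
Definition A_n := {ideal_quot An_idealr}.

Definition An_const (c : K) : A_n := \pi_A_n (c%:MP).
Definition An_y : A_n := \pi_A_n yP.

Definition is_derivation (d : A_n -> A_n) : Prop :=
  [/\ forall u v, d (u + v) = d u + d v,
      forall (c : K) u, d (An_const c * u) = An_const c * d u
    & forall u v, d (u * v) = d u * v + u * d v].

End An.

(* Differentiating the two relations x^n y^2 = y^(n+2) and x^(2n+1) = x y^(n+1)
   with the Leibniz rule gives two linear equations in dx and dy; an explicit
   combination of them and of the relations themselves leaves
   (n-1) y^(2n) dy = 0.  As n-1 is invertible in K, y^(2n) dy = 0, whence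
   d(y^(2n+1)) = (2n+1) y^(2n) dy = 0. *)

From HB Require Import structures.
From mathcomp Require Import all_boot all_order all_algebra.
From mathcomp Require Import ring_quotient generic_quotient mpoly.
From mathcomp Require Import ring zify.

Set Implicit Arguments.
Unset Strict Implicit.
Unset Printing Implicit Defensive.

Import GRing.Theory.
Local Open Scope ring_scope.
Local Open Scope quotient_scope.

Section Leibniz.
Variables (R : comPzRingType) (d : R -> R).
Hypothesis dM : forall u v, d (u * v) = d u * v + u * d v.

Lemma leibnizX u k : d (u ^+ k.+1) = k.+1%:R * u ^+ k * d u.
Proof.
elim: k => [|k IHk]; first by rewrite expr1 expr0 mulr1 mul1r.
by rewrite exprSr dM IHk !exprS; ring.
Qed.

Lemma leibniz_relations_natr_eq0 (n : nat) (x y : R) : (1 < n)%N ->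
  x ^+ n * y ^+ 2 = y ^+ (n + 2) ->
  x ^+ (2 * n + 1) = x * y ^+ (n + 1) ->
  n.-1%:R * (y ^+ (2 * n) * d y) = 0.
Proof.
case: n => [|[|m]] // _ rel2 rel3.
rewrite (_ : (m.+2 + 2 = (m + 3).+1)%N) in rel2; last by lia.
rewrite (_ : (2 * m.+2 + 1 = (m + m + 4).+1)%N) in rel3; last by lia.
rewrite (_ : (m.+2 + 1 = (m + 2).+1)%N) in rel3; last by lia.
have := congr1 d rel2; have := congr1 d rel3.
rewrite [d (_ * _)]dM [d (_ * _)]dM !leibnizX.
rewrite (_ : (2 * m.+2 = m + m + 4)%N) /=; last by lia.
move: rel2 rel3; rewrite !exprS !exprD ?expr0 ?expr1 ?mulr1.
set P := x ^+ m; set Q := y ^+ m; set f := d x; set g := d y.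
move=> /eqP; rewrite -subr_eq0 => /eqP rel2.
move=> /eqP; rewrite -subr_eq0 => /eqP rel3.
move=> /eqP; rewrite -subr_eq0 => /eqP drel3.
move=> /eqP; rewrite -subr_eq0 => /eqP drel2.
(* With n = m + 2 the combination is
   x^(n-1) drel3 - 2 y^(n-1) drel2 - (2n+1) x^(n-2) dx rel3 + (n+5) y^(n-2) dy rel2. *)
transitivity
  (P * x * 0 - 2 * Q * y * 0 - (m + m + 5)%:R * P * f * 0 + (m + 7)%:R * Q * g * 0).
  by rewrite -{1}drel3 -{1}drel2 -{1}rel3 -{1}rel2; ring.
by rewrite !mulr0 subrr sub0r oppr0 add0r.
Qed.
End Leibniz.

Lemma natf_neq0_coprime_pchar (K : fieldType) (m : nat) : (0 < m)%N ->
  (forall p : nat, p \in [pchar K] -> coprime p m) -> m%:R != 0 :> K.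
Proof.
move=> m_gt0 coprime_m; rewrite natf_neq0_pchar; apply/pnatP => // p p_pr p_dvd.
by apply/negP => /coprime_m; rewrite prime_coprime // p_dvd.
Qed.

Section QuotientAn.
Variables (K : fieldType) (n : nat).
Local Notation A := (A_n K n).

Definition An_x : A := \pi_A (xP K).

Lemma An_pi_eq (p q : {mpoly K[2]}) : in_idealP n (p - q) -> \pi_A p = \pi_A q.
Proof.
by move=> pq_in; apply/eqP; rewrite -Quotient.idealrBE; apply/An_idealE.
Qed.

Lemma An_rel2 : An_x ^+ n * An_y K n ^+ 2 = An_y K n ^+ (n + 2).
Proof.
rewrite /An_x /An_y -!rmorphXn -rmorphM; apply: An_pi_eq.
by exists 0, 1, 0; rewrite !mul0r mul1r add0r addr0.
Qed.

Lemma An_rel3 : An_x ^+ (2 * n + 1) = An_x * An_y K n ^+ (n + 1).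
Proof.
rewrite /An_x /An_y -!rmorphXn -rmorphM; apply: An_pi_eq.
by exists 0, 0, 1; rewrite !mul0r mul1r !add0r.
Qed.

Lemma An_const1 : @An_const K n 1 = 1.
Proof. by rewrite /An_const !rmorph1. Qed.

Lemma An_constM c c' : @An_const K n (c * c') = @An_const K n c * @An_const K n c'.
Proof. by rewrite /An_const !rmorphM. Qed.

Lemma An_const_nat k : @An_const K n k%:R = k%:R.
Proof. by rewrite /An_const rmorph_nat rmorph_nat. Qed.

Lemma An_natr_mul_eq0 k (u : A) : k%:R != 0 :> K -> k%:R * u = 0 -> u = 0.
Proof.
move=> k_neq0 ku0.
by rewrite -[u]mul1r -An_const1 -(mulVf k_neq0) An_constM An_const_nat -mulrA ku0 mulr0.
Qed.

End QuotientAn.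

Theorem theorem1p5 (K : fieldType) (n : nat) :
  (2 <= n)%N ->
  (forall p : nat, p \in [pchar K] -> coprime p n && coprime p n.-1) ->
  forall d : A_n K n -> A_n K n,
    is_derivation d ->
    d (An_y K n ^+ (2 * n + 1)) = 0.
Proof.
move=> n_gt1 coprime_n d [_ _ dM].
have n1_neq0 : n.-1%:R != 0 :> K.
  by apply: natf_neq0_coprime_pchar => [|p /coprime_n /andP[_ ->]]; first lia.
have ydy_eq0 := An_natr_mul_eq0 n1_neq0
  (leibniz_relations_natr_eq0 dM n_gt1 (An_rel2 K n) (An_rel3 K n)).
by rewrite addn1 leibnizX // -mulrA ydy_eq0 mulr0.
Qed.
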